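(* Let $\phi(x_1,\dots,x_n)=\bigwedge_{i=1}^m (c_{i1}\lor\cdots\lor c_{ik_i})$ be a CNF formula, where each $c_{ij}$ is a literal $x_l$ or $\lnot x_l$. Introduce fresh variables $y_1,\dots,y_m$ and define the 2-CNF formula $$\psi(x_1,\dots,x_n,y_1,\dots,y_m)=\bigwedge_{i=1}^m\bigwedge_{j=1}^{k_i}(\lnot c_{ij}\lor\lnot y_i).$$ Then $$\#(\phi)=\#\mathrm{SAT}_\pm\big(\psi,\{y_1,\dots,y_m\}\big),$$ where $\#(\phi)$ is the number of satisfying assignments of $\phi$.
   Context: For a CNF formula $f$ on variables $z_1,\dots,z_N$ and a set $S$ of its variables, $\#\mathrm{SAT}_\pm(f,S)$ is the sum of $f(\vec z)$ over assignments $\vec z$ in which the XOR of the variables in $S$ is $0$, minus the sum of $f(\vec z)$ over assignments in which that XOR is $1$. *)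

From mathcomp Require Import all_boot all_algebra.
Set Implicit Arguments. Unset Strict Implicit. Unset Printing Implicit Defensive.
Import GRing.Theory.

(* A literal over variables 'I_N: (l, true) is x_l, (l, false) is ~ x_l. *)
Definition lit (N : nat) := ('I_N * bool)%type.
Definition clause (N : nat) := seq (lit N).
Definition cnf (N : nat) := seq (clause N).

Definition assignment (N : nat) := {ffun 'I_N -> bool}.

Definition eval_lit N (z : assignment N) (c : lit N) : bool :=
  if c.2 then z c.1 else ~~ z c.1.
Definition eval_clause N (z : assignment N) (C : clause N) : bool :=
  has (eval_lit z) C.
Definition eval_cnf N (f : cnf N) (z : assignment N) : bool :=
  all (eval_clause z) f.

Definition count_sat N (f : cnf N) : nat := #|[set z : assignment N | eval_cnf f z]|.

Definition xor_on N (S : {set 'I_N}) (z : assignment N) : bool :=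
  \big[addb/false]_(j in S) z j.

Definition sharpSAT_pm N (f : cnf N) (S : {set 'I_N}) : int :=
  (\sum_(z : assignment N | ~~ xor_on S z) (eval_cnf f z : nat)%:Z -
   \sum_(z : assignment N | xor_on S z) (eval_cnf f z : nat)%:Z)%R.

Definition neg_lit N (c : lit N) : lit N := (c.1, ~~ c.2).

Definition x_lit n m (c : lit n) : lit (n + m) := (lshift m c.1, c.2).
Definition y_var n m (i : 'I_m) : 'I_(n + m) := rshift n i.

Definition psi_of n (phi : cnf n) : cnf (n + size phi) :=
  flatten [seq [seq [:: neg_lit (x_lit (size phi) c); (y_var n i, false)]
               | c <- nth [::] phi i] | i <- enum 'I_(size phi)].

Definition y_set n m : {set 'I_(n + m)} := [set y_var n i | i : 'I_m].

(* Split an assignment of psi into its x-part and its y-part. The sign of the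
   y-part is the product of the signs (-1)^(y_i), and psi holds iff every y_i
   implies that clause i of phi fails, so for fixed x the signed sum over y
   factors into a product over the clauses of
   sum_(b : bool) (-1)^b [b -> ~ C_i(x)] = 1 - [~ C_i(x)] = [C_i(x)].
   The product of these indicators is [phi(x)], and summing over x gives #(phi). *)

From mathcomp Require Import all_boot all_algebra.
Set Implicit Arguments. Unset Strict Implicit. Unset Printing Implicit Defensive.
Import GRing.Theory.
Local Open Scope ring_scope.

Definition ffun_cat (T : Type) n m (x : {ffun 'I_n -> T}) (y : {ffun 'I_m -> T})
  : {ffun 'I_(n + m) -> T} :=
  [ffun k => match split k with inl l => x l | inr i => y i end].

Lemma ffun_cat_lshift (T : Type) n m (x : {ffun 'I_n -> T}) (y : {ffun 'I_m -> T})
  (l : 'I_n) : ffun_cat x y (lshift m l) = x l.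
Proof. by rewrite ffunE (unsplitK (inl _ l)). Qed.

Lemma ffun_cat_rshift (T : Type) n m (x : {ffun 'I_n -> T}) (y : {ffun 'I_m -> T})
  (i : 'I_m) : ffun_cat x y (rshift n i) = y i.
Proof. by rewrite ffunE (unsplitK (inr _ i)). Qed.

Lemma ffun_cat_bij (T : Type) n m :
  bijective (fun p : {ffun 'I_n -> T} * {ffun 'I_m -> T} => ffun_cat p.1 p.2).
Proof.
exists (fun z : {ffun 'I_(n + m) -> T} =>
  ([ffun l => z (lshift m l)], [ffun i => z (rshift n i)])).
- case=> x y /=; congr pair; apply/ffunP => k.
  + by rewrite ffunE ffun_cat_lshift.
  + by rewrite ffunE ffun_cat_rshift.
- move=> z; apply/ffunP => k; rewrite ffunE.
  by case: splitP => j def_k; rewrite ffunE; congr (z _); apply: val_inj.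
Qed.

Lemma big_ffun_cat (R : Type) (idx : R) (op : Monoid.com_law idx)
  (T : finType) n m (F : {ffun 'I_(n + m) -> T} -> R) :
  \big[op/idx]_z F z = \big[op/idx]_x \big[op/idx]_y F (ffun_cat x y).
Proof.
rewrite (reindex _ (onW_bij _ (ffun_cat_bij T n m))) /=.
by rewrite -(pair_big predT predT (fun x y => F (ffun_cat x y))).
Qed.

Lemma natr_all (R : pzSemiRingType) (T : Type) (P : pred T) (s : seq T) :
  (all P s)%:R = \prod_(x <- s) (P x)%:R :> R.
Proof.
have nat_of_andb : {morph nat_of_bool : a b / a && b >-> (a * b)%N} by move=> a b; rewrite mulnb.
by rewrite -big_all (big_morph _ nat_of_andb (erefl : nat_of_bool true = 1%N)) natr_prod.
Qed.

Lemma signr_big_addb (R : pzRingType) (I : Type) (r : seq I) (P : pred I)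
  (F : I -> bool) :
  (-1) ^+ (\big[addb/false]_(i <- r | P i) F i) = \prod_(i <- r | P i) (-1) ^+ F i :> R.
Proof. by apply: (big_morph (fun b : bool => (-1) ^+ b)) => // a b; rewrite signr_addb. Qed.

Lemma sum_signr_implyb (R : pzRingType) (c : bool) :
  \sum_(b : bool) (-1) ^+ b * (b ==> ~~ c)%:R = c%:R :> R.
Proof. by rewrite big_bool; case: c; rewrite /= !mulr1 ?mulr0 ?add0r // expr1 addNr. Qed.

Lemma all_implyb (T : Type) (b : bool) (a : pred T) (s : seq T) :
  all (fun c => b ==> a c) s = b ==> all a s.
Proof. by case: b; [apply: eq_all | apply: all_predT]. Qed.

Lemma all_flatten (T : Type) (a : pred T) (ss : seq (seq T)) :
  all a (flatten ss) = all (all a) ss.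
Proof. by elim: ss => //= s ss IHss; rewrite all_cat IHss. Qed.

Lemma card_set_sum (T : finType) (P : pred T) : #|[set z | P z]| = (\sum_z P z)%N.
Proof.
rewrite -sum1_card big_mkcond /=; apply: eq_bigr => z _.
by rewrite inE; case: (P z).
Qed.

Lemma sharpSAT_pmE N (f : cnf N) (S : {set 'I_N}) :
  sharpSAT_pm f S = \sum_z (-1) ^+ xor_on S z * (eval_cnf f z)%:R.
Proof.
rewrite /sharpSAT_pm [RHS](bigID (fun z => ~~ xor_on S z)) /= -sumrN.
congr (_ + _); apply: eq_big => z; rewrite ?negbK //.
  by move/negbTE ->; rewrite mul1r natz.
by move ->; rewrite mulN1r natz.
Qed.

Lemma eval_cnf_prod (R : pzSemiRingType) n (phi : cnf n) (x : assignment n) :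
  (eval_cnf phi x)%:R = \prod_(i < size phi) (eval_clause x (nth [::] phi i))%:R :> R.
Proof. by rewrite natr_all (big_nth [::]) big_mkord. Qed.

Lemma eval_neg_lit N (z : assignment N) (c : lit N) :
  eval_lit z (neg_lit c) = ~~ eval_lit z c.
Proof. by case: c => l []; rewrite /eval_lit /= ?negbK. Qed.

Lemma eval_lit_x_lit n m (x : assignment n) (y : assignment m) (c : lit n) :
  eval_lit (ffun_cat x y) (x_lit m c) = eval_lit x c.
Proof. by rewrite /eval_lit /= ffun_cat_lshift. Qed.

Section PsiOfCat.

Variables (n : nat) (phi : cnf n) (x : assignment n) (y : assignment (size phi)).

Lemma xor_on_y_set_cat :
  xor_on (y_set n (size phi)) (ffun_cat x y) = \big[addb/false]_i y i.
Proof.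
rewrite /xor_on big_imset /=; last by move=> i j _ _; apply: rshift_inj.
by apply: eq_bigr => i _; rewrite ffun_cat_rshift.
Qed.

Lemma eval_psi_of_cat :
  eval_cnf (psi_of phi) (ffun_cat x y) =
  all (fun i => y i ==> ~~ eval_clause x (nth [::] phi i)) (enum 'I_(size phi)).
Proof.
rewrite /eval_cnf /psi_of all_flatten all_map; apply: eq_all => i /=.
rewrite all_map -all_predC -all_implyb; apply: eq_all => c /=.
rewrite /eval_clause /= orbF eval_neg_lit eval_lit_x_lit /eval_lit /=.
by rewrite ffun_cat_rshift implybE orbC.
Qed.

End PsiOfCat.

Theorem mainTheorem3 (n : nat) (phi : cnf n) :
  ((count_sat phi)%:Z = sharpSAT_pm (psi_of phi) (y_set n (size phi)))%R.
Proof.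
rewrite sharpSAT_pmE big_ffun_cat /count_sat card_set_sum -natz natr_sum.
apply: eq_bigr => x _; rewrite eval_cnf_prod.
rewrite [LHS](eq_bigr _ (fun i _ => esym (sum_signr_implyb _ _))).
rewrite bigA_distr_bigA; apply: eq_bigr => y _.
rewrite xor_on_y_set_cat signr_big_addb eval_psi_of_cat natr_all big_enum -big_split.
by apply: eq_bigr.
Qed.
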